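(* The category of small symmetric purely monoidal categories and symmetric (strong) monoidal functors between them is a reflective subcategory of the category of small symmetric monoidal categories and symmetric (strong) monoidal functors.
   Context: An object $A$ of a monoidal category $(\mathcal M,\otimes,I)$ is weakly invertible if there is an object $B$ with $A\otimes B\cong B\otimes A\cong I$. A monoidal category $\mathcal M$ is purely monoidal (pure) if for any pair of weakly invertible objects of $\mathcal M$ there is exactly one isomorphism between them (equivalently, every weakly invertible object is isomorphic to the unit and the unit has only the identity automorphism). A symmetric purely monoidal category is a symmetric monoidal category which is pure. Monoidal functors are strong monoidal, i.e. their unit and tensor coherence maps are isomorphisms. Both categories here are regarded as ordinary 1-categories. *)

Set Implicit Arguments.

Record Cat : Type := {
  ob : Type;
  hom : ob -> ob -> Type;
  idm : forall a, hom a a;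
  comp : forall a b c, hom b c -> hom a b -> hom a c;
  comp_idl : forall a b (f : hom a b), comp (idm b) f = f;
  comp_idr : forall a b (f : hom a b), comp f (idm a) = f;
  comp_assoc : forall a b c d (f : hom c d) (g : hom b c) (h : hom a b),
      comp f (comp g h) = comp (comp f g) h
}.
Arguments hom {_} _ _.
Arguments idm {_} _.
Arguments comp {_ _ _ _} _ _.

Definition is_iso (C : Cat) (a b : ob C) (f : hom a b) : Prop :=
  exists g : hom b a, comp g f = idm a /\ comp f g = idm b.
Arguments is_iso {C a b} f.

Definition isomorphic (C : Cat) (a b : ob C) : Prop :=
  exists f : hom a b, is_iso f.
Arguments isomorphic {C} a b.

Record SMC : Type := {
  scat :> Cat;
  tens : ob scat -> ob scat -> ob scat;
  tensm : forall a b c d, hom a b -> hom c d -> hom (tens a c) (tens b d);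
  tens_id : forall a c, tensm _ _ _ _ (idm a) (idm c) = idm (tens a c);
  tens_comp : forall a b e c d g (f : hom b e) (f' : hom a b)
                     (h : hom d g) (h' : hom c d),
      tensm _ _ _ _ (comp f f') (comp h h') = comp (tensm _ _ _ _ f h) (tensm _ _ _ _ f' h');
  unit : ob scat;
  asc : forall a b c, hom (tens (tens a b) c) (tens a (tens b c));
  asc_iso : forall a b c, is_iso (asc a b c);
  asc_nat : forall a a' b b' c c' (f : hom a a') (g : hom b b') (h : hom c c'),
      comp (asc a' b' c') (tensm _ _ _ _ (tensm _ _ _ _ f g) h)
      = comp (tensm _ _ _ _ f (tensm _ _ _ _ g h)) (asc a b c);
  lu : forall a, hom (tens unit a) a;
  lu_iso : forall a, is_iso (lu a);
  lu_nat : forall a a' (f : hom a a'),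
      comp (lu a') (tensm _ _ _ _ (idm unit) f) = comp f (lu a);
  ru : forall a, hom (tens a unit) a;
  ru_iso : forall a, is_iso (ru a);
  ru_nat : forall a a' (f : hom a a'),
      comp (ru a') (tensm _ _ _ _ f (idm unit)) = comp f (ru a);
  pentagon : forall a b c d,
      comp (asc a b (tens c d)) (asc (tens a b) c d)
      = comp (tensm _ _ _ _ (idm a) (asc b c d))
             (comp (asc a (tens b c) d) (tensm _ _ _ _ (asc a b c) (idm d)));
  triangle : forall a b,
      comp (tensm _ _ _ _ (idm a) (lu b)) (asc a unit b) = tensm _ _ _ _ (ru a) (idm b);
  br : forall a b, hom (tens a b) (tens b a);
  br_nat : forall a a' b b' (f : hom a a') (g : hom b b'),
      comp (br a' b') (tensm _ _ _ _ f g) = comp (tensm _ _ _ _ g f) (br a b);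
  br_sym : forall a b, comp (br b a) (br a b) = idm (tens a b);
  hexagon : forall a b c,
      comp (asc b c a) (comp (br a (tens b c)) (asc a b c))
      = comp (tensm _ _ _ _ (idm b) (br a c))
             (comp (asc b a c) (tensm _ _ _ _ (br a b) (idm c)))
}.
Arguments tensm _ {a b c d} _ _.

Definition weakly_invertible (M : SMC) (a : ob M) : Prop :=
  exists b : ob M, isomorphic (tens M a b) (unit M) /\
                   isomorphic (tens M b a) (unit M).

Arguments weakly_invertible {M} a.

Definition pure (M : SMC) : Prop :=
  forall a b : ob M, weakly_invertible a -> weakly_invertible b ->
    exists f : hom a b, is_iso f /\ forall g : hom a b, is_iso g -> g = f.

Record SMFData (M N : SMC) : Type := {
  fob : ob M -> ob N;
  fmor : forall a b, hom a b -> hom (fob a) (fob b);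
  phi0 : hom (unit N) (fob (unit M));
  phi2 : forall a b, hom (tens N (fob a) (fob b)) (fob (tens M a b))
}.
Arguments fob {M N} _ _.
Arguments fmor {M N} _ {a b} _.
Arguments phi0 {M N} _.
Arguments phi2 {M N} _ _ _.

Definition is_SMF (M N : SMC) (F : SMFData M N) : Prop :=
  (forall a, fmor F (idm a) = idm (fob F a)) /\
  (forall a b c (g : hom b c) (f : hom a b),
      fmor F (comp g f) = comp (fmor F g) (fmor F f)) /\
  is_iso (phi0 F) /\
  (forall a b, is_iso (phi2 F a b)) /\
  (forall a a' b b' (f : hom a a') (g : hom b b'),
      comp (phi2 F a' b') (tensm N (fmor F f) (fmor F g))
      = comp (fmor F (tensm M f g)) (phi2 F a b)) /\
  (forall a b c,
      comp (fmor F (asc M a b c))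
           (comp (phi2 F (tens M a b) c) (tensm N (phi2 F a b) (idm (fob F c))))
      = comp (phi2 F a (tens M b c))
             (comp (tensm N (idm (fob F a)) (phi2 F b c))
                   (asc N (fob F a) (fob F b) (fob F c)))) /\
  (forall a,
      comp (fmor F (lu M a))
           (comp (phi2 F (unit M) a) (tensm N (phi0 F) (idm (fob F a))))
      = lu N (fob F a)) /\
  (forall a,
      comp (fmor F (ru M a))
           (comp (phi2 F a (unit M)) (tensm N (idm (fob F a)) (phi0 F)))
      = ru N (fob F a)) /\
  (forall a b,
      comp (fmor F (br M a b)) (phi2 F a b)
      = comp (phi2 F b a) (br N (fob F a) (fob F b))).

Arguments is_SMF {M N} F.

Record SMFunctor (M N : SMC) : Type := {
  smf_data :> SMFData M N;
  smf_prop : is_SMF smf_data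
}.

Definition smf_comp_data (M N P : SMC) (G : SMFData N P) (F : SMFData M N)
  : SMFData M P :=
  {| fob := fun a => fob G (fob F a);
     fmor := fun a b f => fmor G (fmor F f);
     phi0 := comp (fmor G (phi0 F)) (phi0 G);
     phi2 := fun a b => comp (fmor G (phi2 F a b)) (phi2 G (fob F a) (fob F b)) |}.

(* The reflection R(M) has the objects of M.  Its morphisms are terms built
   from morphisms of M by composition and tensor product, together with a
   formal arrow a -> b whenever a and b become weakly invertible under every
   symmetric monoidal functor into a pure category; two terms are identified
   when every such functor F interprets them equally (tensors through the
   coherence maps of F, formal arrows as the unique isomorphisms of the pure
   target).  Interpretation is then the factorisation of F through M -> R(M).
   It is unique because any functor out of R(M) sends a formal arrow to an
   isomorphism between weakly invertible objects of a pure category.  R(M) is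
   pure because weakly invertible objects of R(M) stay weakly invertible under
   every interpretation, so formal arrows join any two of them, and every
   isomorphism of R(M) is interpreted as the unique one. *)

From Stdlib Require Import ClassicalEpsilon FunctionalExtensionality PropExtensionality
  ProofIrrelevance.

Set Implicit Arguments.
Unset Strict Implicit.

Arguments comp_idl {_ _ _} f.
Arguments comp_idr {_ _ _} f.
Arguments comp_assoc {_ _ _ _ _} f g h.
Arguments tens_id {s} a c.
Arguments tens_comp {s a b e c d g} f f' h h'.
Arguments asc_nat {s a a' b b' c c'} f g h.
Arguments lu_nat {s a a'} f.
Arguments ru_nat {s a a'} f.
Arguments br_nat {s a a' b b'} f g.

Section CategoryFacts.
Variable C : Cat.

Lemma iso_id (a : ob C) : is_iso (idm a).
Proof. exists (idm a); split; apply comp_idl. Qed.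

Lemma iso_comp (a b c : ob C) (g : hom b c) (f : hom a b) :
  is_iso g -> is_iso f -> is_iso (comp g f).
Proof.
  intros [g' [Hg1 Hg2]] [f' [Hf1 Hf2]]. exists (comp f' g'); split.
  - rewrite <- !comp_assoc, (comp_assoc g' g f), Hg1, comp_idl. exact Hf1.
  - rewrite <- !comp_assoc, (comp_assoc f f' g'), Hf2, comp_idl. exact Hg2.
Qed.

Definition iso_inv (a b : ob C) (f : hom a b) (H : is_iso f) : hom b a :=
  proj1_sig (constructive_indefinite_description _ H).

Lemma iso_inv_l (a b : ob C) (f : hom a b) (H : is_iso f) : comp (iso_inv H) f = idm a.
Proof. exact (proj1 (proj2_sig (constructive_indefinite_description _ H))). Qed.

Lemma iso_inv_r (a b : ob C) (f : hom a b) (H : is_iso f) : comp f (iso_inv H) = idm b.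
Proof. exact (proj2 (proj2_sig (constructive_indefinite_description _ H))). Qed.

Lemma iso_inv_iso (a b : ob C) (f : hom a b) (H : is_iso f) : is_iso (iso_inv H).
Proof. exists f; split; [apply iso_inv_r | apply iso_inv_l]. Qed.

Lemma iso_cancel_r (a b c : ob C) (h : hom a b) (u v : hom b c) :
  is_iso h -> comp u h = comp v h -> u = v.
Proof.
  intros [h' [H1 H2]] E.
  rewrite <- (comp_idr u), <- (comp_idr v), <- H2, !comp_assoc, E. reflexivity.
Qed.

Lemma comp_rewrite2 (a b c : ob C) (p : hom b c) (q : hom a b) (r : hom a c) :
  comp p q = r -> forall x (s : hom x a), comp p (comp q s) = comp r s.
Proof. intros E x s. rewrite comp_assoc, E. reflexivity. Qed.

Lemma comp_rewrite3 (a b c d : ob C) (p : hom c d) (q : hom b c) (r : hom a b) (e : hom a d) :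
  comp p (comp q r) = e -> forall x (s : hom x a), comp p (comp q (comp r s)) = comp e s.
Proof. intros E x s. rewrite (comp_assoc q r s), comp_assoc, E. reflexivity. Qed.

End CategoryFacts.

Ltac rassoc := repeat rewrite <- comp_assoc.

Tactic Notation "chain_rewrite" open_constr(E) :=
  rassoc;
  first [rewrite E | rewrite (comp_rewrite2 E) | rewrite (comp_rewrite3 E)];
  rassoc.

Section MonoidalFacts.
Variable N : SMC.

Lemma tens_iso (a b c d : ob N) (f : hom a b) (g : hom c d) :
  is_iso f -> is_iso g -> is_iso (tensm N f g).
Proof.
  intros [f' [F1 F2]] [g' [G1 G2]]. exists (tensm N f' g'); split;
    rewrite <- tens_comp; [rewrite F1, G1 | rewrite F2, G2]; apply tens_id.
Qed.

Lemma comp_tensm (a b e c d g : ob N) (f : hom b e) (f' : hom a b) (h : hom d g) (h' : hom c d) :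
  comp (tensm N f h) (tensm N f' h') = tensm N (comp f f') (comp h h').
Proof. symmetry; apply tens_comp. Qed.

Lemma tensm_compl (a b c a' b' : ob N) (f : hom b c) (g : hom a b) (h : hom a' b') :
  tensm N (comp f g) h = comp (tensm N f (idm b')) (tensm N g h).
Proof. rewrite <- tens_comp, comp_idl. reflexivity. Qed.

Lemma tensm_compr (a b c a' b' : ob N) (f : hom b c) (g : hom a b) (h : hom a' b') :
  tensm N h (comp f g) = comp (tensm N (idm b') f) (tensm N h g).
Proof. rewrite <- tens_comp, comp_idl. reflexivity. Qed.

Lemma tensm_split_l (a b a' b' : ob N) (f : hom a b) (g : hom a' b') :
  tensm N f g = comp (tensm N f (idm b')) (tensm N (idm a) g).
Proof. rewrite <- tens_comp, comp_idl, comp_idr. reflexivity. Qed.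

Lemma tensm_split_r (a b a' b' : ob N) (f : hom a b) (g : hom a' b') :
  tensm N f g = comp (tensm N (idm b) g) (tensm N f (idm a')).
Proof. rewrite <- tens_comp, comp_idl, comp_idr. reflexivity. Qed.

End MonoidalFacts.

Lemma smf_data_inj (M N : SMC) (F G : SMFunctor M N) : smf_data F = smf_data G -> F = G.
Proof.
  destruct F as [DF HF], G as [DG HG]; cbn. intros <-. f_equal. apply proof_irrelevance.
Qed.

Lemma SMFData_ext (M N : SMC) (D : SMFData M N)
    (fm : forall a b, hom a b -> hom (fob D a) (fob D b)) p0 p2 :
  (forall a b (f : hom a b), fm a b f = fmor D f) -> p0 = phi0 D ->
  (forall a b, p2 a b = phi2 D a b) ->
  {| fob := fob D; fmor := fm; phi0 := p0; phi2 := p2 |} = D.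
Proof.
  destruct D as [o m q0 q2]; cbn. intros Hm -> H2.
  replace fm with m by (do 3 (apply functional_extensionality_dep; intro); auto).
  replace p2 with q2 by (do 2 (apply functional_extensionality_dep; intro); auto).
  reflexivity.
Qed.

Section MonoidalFunctorFacts.
Variables (M N : SMC) (F : SMFunctor M N).

Lemma fmor_id (a : ob M) : fmor F (idm a) = idm (fob F a).
Proof. apply (smf_prop F). Qed.

Lemma fmor_comp (a b c : ob M) (g : hom b c) (f : hom a b) :
  fmor F (comp g f) = comp (fmor F g) (fmor F f).
Proof. apply (smf_prop F). Qed.

Lemma phi0_iso : is_iso (phi0 F).
Proof. apply (smf_prop F). Qed.

Lemma phi2_iso (a b : ob M) : is_iso (phi2 F a b).
Proof. apply (smf_prop F). Qed.

Lemma phi2_nat (a a' b b' : ob M) (f : hom a a') (g : hom b b') :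
  comp (phi2 F a' b') (tensm N (fmor F f) (fmor F g)) = comp (fmor F (tensm M f g)) (phi2 F a b).
Proof. apply (smf_prop F). Qed.

Lemma phi2_asc (a b c : ob M) :
  comp (fmor F (asc M a b c))
       (comp (phi2 F (tens M a b) c) (tensm N (phi2 F a b) (idm (fob F c))))
  = comp (phi2 F a (tens M b c))
         (comp (tensm N (idm (fob F a)) (phi2 F b c)) (asc N (fob F a) (fob F b) (fob F c))).
Proof. apply (smf_prop F). Qed.

Lemma phi2_lu (a : ob M) :
  comp (fmor F (lu M a)) (comp (phi2 F (unit M) a) (tensm N (phi0 F) (idm (fob F a))))
  = lu N (fob F a).
Proof. apply (smf_prop F). Qed.

Lemma phi2_ru (a : ob M) :
  comp (fmor F (ru M a)) (comp (phi2 F a (unit M)) (tensm N (idm (fob F a)) (phi0 F)))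
  = ru N (fob F a).
Proof. apply (smf_prop F). Qed.

Lemma phi2_br (a b : ob M) :
  comp (fmor F (br M a b)) (phi2 F a b) = comp (phi2 F b a) (br N (fob F a) (fob F b)).
Proof. apply (smf_prop F). Qed.

Lemma fmor_iso (a b : ob M) (f : hom a b) : is_iso f -> is_iso (fmor F f).
Proof.
  intros [g [H1 H2]]. exists (fmor F g).
  rewrite <- !fmor_comp, H1, H2, !fmor_id. split; reflexivity.
Qed.

Lemma fob_tens_unit (a b : ob M) :
  isomorphic (tens M a b) (unit M) -> isomorphic (tens N (fob F a) (fob F b)) (unit N).
Proof.
  intros [i Hi]. exists (comp (iso_inv phi0_iso) (comp (fmor F i) (phi2 F a b))).
  apply iso_comp; [apply iso_inv_iso | apply iso_comp; [apply fmor_iso, Hi | apply phi2_iso]].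
Qed.

Lemma fob_weakly_invertible (a : ob M) :
  weakly_invertible a -> weakly_invertible (fob F a).
Proof.
  intros [b [Hab Hba]]. exists (fob F b). split; apply fob_tens_unit; assumption.
Qed.

Definition phi2_inv (a b : ob M) := iso_inv (phi2_iso a b).

Lemma phi2_inv_l (a b : ob M) : comp (phi2_inv a b) (phi2 F a b) = idm _.
Proof. apply iso_inv_l. Qed.

Lemma phi2_inv_r (a b : ob M) : comp (phi2 F a b) (phi2_inv a b) = idm _.
Proof. apply iso_inv_r. Qed.

Definition ftensm (a b a' b' : ob M) (x : hom (fob F a) (fob F b)) (y : hom (fob F a') (fob F b')) :
  hom (fob F (tens M a a')) (fob F (tens M b b')) :=
  comp (phi2 F b b') (comp (tensm N x y) (phi2_inv a a')).

Lemma ftensm_phi2 (a b a' b' : ob M) (x : hom (fob F a) (fob F b)) (y : hom (fob F a') (fob F b')) :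
  comp (ftensm x y) (phi2 F a a') = comp (phi2 F b b') (tensm N x y).
Proof. unfold ftensm. rewrite <- !comp_assoc, phi2_inv_l, comp_idr. reflexivity. Qed.

Lemma ftensm_id (a a' : ob M) : ftensm (idm (fob F a)) (idm (fob F a')) = idm _.
Proof. unfold ftensm. rewrite tens_id, comp_idl, phi2_inv_r. reflexivity. Qed.

Lemma ftensm_comp (a b c a' b' c' : ob M)
    (x : hom (fob F b) (fob F c)) (x' : hom (fob F a) (fob F b))
    (y : hom (fob F b') (fob F c')) (y' : hom (fob F a') (fob F b')) :
  ftensm (comp x x') (comp y y') = comp (ftensm x y) (ftensm x' y').
Proof.
  unfold ftensm. rewrite tens_comp. chain_rewrite (phi2_inv_l b b'). rewrite comp_idl. reflexivity.
Qed.

Lemma ftensm_fmor (a b a' b' : ob M) (f : hom a b) (g : hom a' b') :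
  ftensm (fmor F f) (fmor F g) = fmor F (tensm M f g).
Proof. apply (iso_cancel_r (phi2_iso a a')). rewrite ftensm_phi2. apply phi2_nat. Qed.

Lemma ftensm_br (a a' b b' : ob M) (x : hom (fob F a) (fob F a')) (y : hom (fob F b) (fob F b')) :
  comp (fmor F (br M a' b')) (ftensm x y) = comp (ftensm y x) (fmor F (br M a b)).
Proof.
  apply (iso_cancel_r (phi2_iso a b)).
  chain_rewrite (ftensm_phi2 x y). chain_rewrite (phi2_br a' b'). chain_rewrite (br_nat x y).
  chain_rewrite (phi2_br a b). chain_rewrite (ftensm_phi2 y x). reflexivity.
Qed.

Lemma ftensm_asc (a a' b b' c c' : ob M) (x : hom (fob F a) (fob F a'))
    (y : hom (fob F b) (fob F b')) (z : hom (fob F c) (fob F c')) :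
  comp (fmor F (asc M a' b' c')) (ftensm (ftensm x y) z)
  = comp (ftensm x (ftensm y z)) (fmor F (asc M a b c)).
Proof.
  apply (iso_cancel_r (iso_comp (phi2_iso (tens M a b) c) (tens_iso (phi2_iso a b) (iso_id (fob F c))))).
  chain_rewrite (ftensm_phi2 (ftensm x y) z). chain_rewrite (comp_tensm (ftensm x y) _ z _).
  rewrite ftensm_phi2, comp_idr. chain_rewrite (tensm_compl (phi2 F a' b') _ z).
  chain_rewrite (phi2_asc a' b' c'). chain_rewrite (asc_nat x y z).
  chain_rewrite (phi2_asc a b c). chain_rewrite (ftensm_phi2 x (ftensm y z)).
  chain_rewrite (comp_tensm x _ (ftensm y z) _).
  rewrite ftensm_phi2, comp_idr. chain_rewrite (tensm_compr (phi2 F b' c') _ x). reflexivity.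
Qed.

Lemma ftensm_lu (a a' : ob M) (x : hom (fob F a) (fob F a')) :
  comp (fmor F (lu M a')) (ftensm (idm (fob F (unit M))) x) = comp x (fmor F (lu M a)).
Proof.
  apply (iso_cancel_r (iso_comp (phi2_iso (unit M) a) (tens_iso phi0_iso (iso_id (fob F a))))).
  chain_rewrite (ftensm_phi2 (idm _) x). chain_rewrite (comp_tensm (idm _) _ x _).
  rewrite comp_idl, comp_idr, (tensm_split_l (phi0 F) x).
  chain_rewrite (phi2_lu a'). chain_rewrite (lu_nat x). chain_rewrite (phi2_lu a). reflexivity.
Qed.

Lemma ftensm_ru (a a' : ob M) (x : hom (fob F a) (fob F a')) :
  comp (fmor F (ru M a')) (ftensm x (idm (fob F (unit M)))) = comp x (fmor F (ru M a)).
Proof.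
  apply (iso_cancel_r (iso_comp (phi2_iso a (unit M)) (tens_iso (iso_id (fob F a)) phi0_iso))).
  chain_rewrite (ftensm_phi2 x (idm _)). chain_rewrite (comp_tensm x _ (idm _) _).
  rewrite comp_idl, comp_idr, (tensm_split_r x (phi0 F)).
  chain_rewrite (phi2_ru a'). chain_rewrite (ru_nat x). chain_rewrite (phi2_ru a). reflexivity.
Qed.

End MonoidalFunctorFacts.

Section PureFacts.
Variables (N : SMC) (pN : pure N).

Definition pure_iso (a b : ob N) (wa : weakly_invertible a) (wb : weakly_invertible b) : hom a b :=
  proj1_sig (constructive_indefinite_description _ (pN wa wb)).

Lemma pure_iso_is_iso (a b : ob N) (wa : weakly_invertible a) (wb : weakly_invertible b) :
  is_iso (pure_iso wa wb).
Proof. exact (proj1 (proj2_sig (constructive_indefinite_description _ (pN wa wb)))). Qed.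

Lemma pure_iso_unique (a b : ob N) (wa : weakly_invertible a) (wb : weakly_invertible b)
    (g : hom a b) :
  is_iso g -> g = pure_iso wa wb.
Proof. exact (proj2 (proj2_sig (constructive_indefinite_description _ (pN wa wb))) g). Qed.

Lemma pure_iso_id (a : ob N) (wa : weakly_invertible a) : pure_iso wa wa = idm a.
Proof. symmetry. apply pure_iso_unique, iso_id. Qed.

Lemma pure_iso_comp (a b c : ob N) (wa : weakly_invertible a) (wb : weakly_invertible b)
    (wc : weakly_invertible c) :
  comp (pure_iso wb wc) (pure_iso wa wb) = pure_iso wa wc.
Proof. apply pure_iso_unique, iso_comp; apply pure_iso_is_iso. Qed.

End PureFacts.

Section Quotient.
Variables (X : Type) (E : X -> X -> Prop).
Hypothesis E_refl : forall x, E x x.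
Hypothesis E_sym : forall x y, E x y -> E y x.
Hypothesis E_trans : forall x y z, E x y -> E y z -> E x z.

Definition quot := { P : X -> Prop | exists x, P = E x }.

Definition cls (x : X) : quot := exist _ (E x) (ex_intro _ x eq_refl).

Definition rep (q : quot) : X := proj1_sig (constructive_indefinite_description _ (proj2_sig q)).

Lemma cls_rep (q : quot) : cls (rep q) = q.
Proof.
  destruct q as [P HP]. unfold rep, cls; cbn.
  destruct (constructive_indefinite_description _ HP) as [x ->].
  apply ProofIrrelevanceTheory.subset_eq_compat. reflexivity.
Qed.

Lemma rep_cls (x : X) : E (rep (cls x)) x.
Proof.
  unfold rep; cbn. destruct (constructive_indefinite_description _ _) as [y Hy]; cbn.
  rewrite <- Hy. apply E_refl.
Qed.

Lemma eq_cls (x y : X) : E x y -> cls x = cls y.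
Proof.
  intro Hxy. apply ProofIrrelevanceTheory.subset_eq_compat.
  apply functional_extensionality; intro z. apply propositional_extensionality.
  split; eauto.
Qed.

End Quotient.
Arguments cls {X E} x.

Section Reflection.
Variable M : SMC.

Definition universally_weakly_invertible (a : ob M) : Prop :=
  forall (N : SMC) (pN : pure N) (F : SMFunctor M N), weakly_invertible (fob F a).

Inductive term : ob M -> ob M -> Type :=
| tm_mor a b : hom a b -> term a b
| tm_comp a b c : term b c -> term a b -> term a c
| tm_tens a b c d : term a b -> term c d -> term (tens M a c) (tens M b d)
| tm_can a b : universally_weakly_invertible a -> universally_weakly_invertible b -> term a b.

Section Interpretation.
Variables (N : SMC) (pN : pure N) (F : SMFunctor M N).

Fixpoint interp a b (t : term a b) : hom (fob F a) (fob F b) :=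
  match t with
  | tm_mor f => fmor F f
  | tm_comp g f => comp (interp g) (interp f)
  | tm_tens f g => ftensm (interp f) (interp g)
  | tm_can ua ub => pure_iso pN (ua N pN F) (ub N pN F)
  end.

End Interpretation.

Definition term_eq a b (t s : term a b) : Prop :=
  forall (N : SMC) (pN : pure N) (F : SMFunctor M N), interp pN F t = interp pN F s.

(* Hom-types of a [Cat] cannot quantify over all of [SMC], so morphisms are
   classes of terms rather than families of their interpretations. *)
Definition Rhom a b : Type := quot (@term_eq a b).

Definition rinterp (N : SMC) (pN : pure N) (F : SMFunctor M N) a b (q : Rhom a b) :
  hom (fob F a) (fob F b) := interp pN F (rep q).

Lemma rinterp_cls N (pN : pure N) F a b (t : term a b) : rinterp pN F (cls t) = interp pN F t.
Proof. exact (rep_cls (E := @term_eq a b) (fun _ _ _ _ => eq_refl) t N pN F). Qed.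

Lemma rhom_ext a b (q q' : Rhom a b) :
  (forall N (pN : pure N) F, rinterp pN F q = rinterp pN F q') -> q = q'.
Proof.
  intro H. rewrite <- (cls_rep q), <- (cls_rep q'). apply eq_cls.
  - intros t s Hts N pN F. symmetry. apply Hts.
  - intros t s u Hts Hsu N pN F. rewrite Hts. apply Hsu.
  - exact H.
Qed.

Definition Rmor a b (f : hom a b) : Rhom a b := cls (tm_mor f).
Definition Rcomp a b c (g : Rhom b c) (f : Rhom a b) : Rhom a c := cls (tm_comp (rep g) (rep f)).
Definition Rtens a b c d (f : Rhom a b) (g : Rhom c d) : Rhom (tens M a c) (tens M b d) :=
  cls (tm_tens (rep f) (rep g)).
Definition Rcan a b (ua : universally_weakly_invertible a) (ub : universally_weakly_invertible b) :
  Rhom a b := cls (tm_can ua ub).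

Section RinterpLaws.
Variables (N : SMC) (pN : pure N) (F : SMFunctor M N).

Lemma rinterp_mor a b (f : hom a b) : rinterp pN F (Rmor f) = fmor F f.
Proof. apply rinterp_cls. Qed.

Lemma rinterp_comp a b c (g : Rhom b c) (f : Rhom a b) :
  rinterp pN F (Rcomp g f) = comp (rinterp pN F g) (rinterp pN F f).
Proof. apply rinterp_cls. Qed.

Lemma rinterp_tens a b c d (f : Rhom a b) (g : Rhom c d) :
  rinterp pN F (Rtens f g) = ftensm (rinterp pN F f) (rinterp pN F g).
Proof. apply rinterp_cls. Qed.

Lemma rinterp_can a b (ua : universally_weakly_invertible a) (ub : universally_weakly_invertible b) :
  rinterp pN F (Rcan ua ub) = pure_iso pN (ua N pN F) (ub N pN F).
Proof. apply rinterp_cls. Qed.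

End RinterpLaws.

Ltac rinterp_ext :=
  apply rhom_ext; intros ? ? ?; cbn;
  repeat first [rewrite rinterp_comp | rewrite rinterp_tens | rewrite rinterp_mor
               | rewrite rinterp_can | rewrite fmor_id].

Lemma Rcomp_cls a b c (g : term b c) (f : term a b) : Rcomp (cls g) (cls f) = cls (tm_comp g f).
Proof. rinterp_ext. rewrite !rinterp_cls. reflexivity. Qed.

Lemma Rtens_cls a b c d (f : term a b) (g : term c d) : Rtens (cls f) (cls g) = cls (tm_tens f g).
Proof. rinterp_ext. rewrite !rinterp_cls. reflexivity. Qed.

Lemma Rcomp_mor a b c (g : hom b c) (f : hom a b) : Rcomp (Rmor g) (Rmor f) = Rmor (comp g f).
Proof. rinterp_ext. symmetry. apply fmor_comp. Qed.

Lemma Rtens_mor a b c d (f : hom a b) (g : hom c d) : Rtens (Rmor f) (Rmor g) = Rmor (tensm M f g).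
Proof. rinterp_ext. apply ftensm_fmor. Qed.

Definition RCat : Cat.
Proof.
  refine {| ob := ob M; hom := Rhom; idm := fun a => Rmor (idm a); comp := Rcomp |};
    intros; rinterp_ext.
  - apply comp_idl.
  - apply comp_idr.
  - apply comp_assoc.
Defined.

Lemma Rmor_iso (a b : ob M) (f : hom a b) : is_iso f -> @is_iso RCat a b (Rmor f).
Proof. intros [g [H1 H2]]. exists (Rmor g). cbn. rewrite !Rcomp_mor, H1, H2. split; reflexivity. Qed.

Ltac Rmor_simpl := cbn; repeat first [rewrite Rcomp_mor | rewrite Rtens_mor]; f_equal.

Definition RSMC : SMC.
Proof.
  refine {| scat := RCat; tens := tens M; tensm := Rtens; unit := unit M;
            asc := fun a b c => Rmor (asc M a b c); asc_iso := fun a b c => Rmor_iso (asc_iso M a b c);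
            lu := fun a => Rmor (lu M a); lu_iso := fun a => Rmor_iso (lu_iso M a);
            ru := fun a => Rmor (ru M a); ru_iso := fun a => Rmor_iso (ru_iso M a);
            br := fun a b => Rmor (br M a b) |}; intros.
  - Rmor_simpl. apply tens_id.
  - rinterp_ext. apply ftensm_comp.
  - rinterp_ext. apply ftensm_asc.
  - rinterp_ext. apply ftensm_lu.
  - rinterp_ext. apply ftensm_ru.
  - Rmor_simpl. apply pentagon.
  - Rmor_simpl. apply triangle.
  - rinterp_ext. apply ftensm_br.
  - Rmor_simpl. apply br_sym.
  - Rmor_simpl. apply hexagon.
Defined.

Definition eta_data : SMFData M RSMC :=
  {| fob := fun a : ob M => a : ob RSMC;
     fmor := fun (a b : ob M) (f : hom a b) => Rmor f : @hom RSMC a b;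
     phi0 := Rmor (idm (unit M)) : @hom RSMC (unit M) (unit M);
     phi2 := fun a b : ob M => Rmor (idm (tens M a b)) : @hom RSMC (tens M a b) (tens M a b) |}.

Lemma eta_is_SMF : is_SMF eta_data.
Proof.
  repeat split; intros; cbn.
  1: exact (eq_sym (Rcomp_mor g f)).
  1, 2: apply (iso_id (C := RSMC)).
  all: Rmor_simpl; rewrite ?tens_id, ?comp_idl, ?comp_idr; reflexivity.
Qed.

Definition eta : SMFunctor M RSMC := Build_SMFunctor eta_is_SMF.

Lemma Rcan_iso a b (ua : universally_weakly_invertible a) (ub : universally_weakly_invertible b) :
  @is_iso RCat a b (Rcan ua ub).
Proof.
  exists (Rcan ub ua). split; rinterp_ext; rewrite pure_iso_comp, pure_iso_id; reflexivity.
Qed.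

Section Lift.
Variables (N : SMC) (pN : pure N).

Definition lift_data (F : SMFunctor M N) : SMFData RSMC N :=
  {| fob := fun a : ob RSMC => fob F a; fmor := fun (a b : ob RSMC) (q : @hom RSMC a b) => rinterp pN F q; phi0 := phi0 F; phi2 := phi2 F |}.

Lemma lift_is_SMF (F : SMFunctor M N) : is_SMF (lift_data F).
Proof.
  repeat split; intros; cbn.
  - rewrite rinterp_mor. apply fmor_id.
  - apply rinterp_comp.
  - apply phi0_iso.
  - apply phi2_iso.
  - rewrite rinterp_tens. symmetry. apply ftensm_phi2.
  - rewrite !rinterp_mor. apply phi2_asc.
  - rewrite !rinterp_mor. apply phi2_lu.
  - rewrite !rinterp_mor. apply phi2_ru.
  - rewrite !rinterp_mor. apply phi2_br.
Qed.

Definition lift (F : SMFunctor M N) : SMFunctor RSMC N := Build_SMFunctor (lift_is_SMF F).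

Lemma lift_comp_eta (F : SMFunctor M N) : smf_comp_data (lift F) eta = smf_data F.
Proof.
  apply (SMFData_ext (D := smf_data F)); cbn.
  - intros. apply rinterp_mor.
  - rewrite rinterp_mor, fmor_id. apply comp_idl.
  - intros. rewrite rinterp_mor, fmor_id. apply comp_idl.
Qed.

Section Restriction.
Variables (G : SMFunctor RSMC N) (HG : is_SMF (smf_comp_data G eta)).
Let GE : SMFunctor M N := Build_SMFunctor HG.

Lemma phi2_restriction a b : phi2 GE a b = phi2 G a b.
Proof. cbn. rewrite (fmor_id G). apply comp_idl. Qed.

Lemma interp_restriction a b (t : term a b) : interp pN GE t = fmor G (cls t).
Proof.
  induction t as [a b f | a b c g IHg f IHf | a b c d f IHf g IHg | a b ua ub]; cbn.
  - reflexivity.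
  - rewrite <- Rcomp_cls, (fmor_comp G), IHg, IHf. reflexivity.
  - apply (iso_cancel_r (phi2_iso GE a c)).
    etransitivity; [apply (ftensm_phi2 (F := GE))|].
    rewrite IHf, IHg, !phi2_restriction, <- Rtens_cls. apply (phi2_nat G).
  - symmetry. apply pure_iso_unique, (fmor_iso G), Rcan_iso.
Qed.

Lemma lift_restriction : lift_data GE = smf_data G.
Proof.
  apply (SMFData_ext (D := smf_data G)); cbn.
  - intros a b q. unfold rinterp. rewrite interp_restriction, cls_rep. reflexivity.
  - rewrite (fmor_id G). apply comp_idl.
  - apply phi2_restriction.
Qed.

End Restriction.

Lemma lift_unique (F : SMFunctor M N) (G : SMFunctor RSMC N) :
  smf_comp_data G eta = smf_data F -> smf_data G = lift_data F.
Proof.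
  intro HGF.
  assert (HG : is_SMF (smf_comp_data G eta)) by (rewrite HGF; apply smf_prop).
  replace F with (Build_SMFunctor HG) by (apply smf_data_inj; exact HGF).
  symmetry. apply lift_restriction.
Qed.

End Lift.

Lemma RSMC_pure : pure RSMC.
Proof.
  intros a b wa wb.
  assert (ua : universally_weakly_invertible a)
    by (intros N pN F; exact (fob_weakly_invertible (lift pN F) wa)).
  assert (ub : universally_weakly_invertible b)
    by (intros N pN F; exact (fob_weakly_invertible (lift pN F) wb)).
  exists (Rcan ua ub). split.
  - apply Rcan_iso.
  - intros g Hg. apply rhom_ext. intros N pN F. rewrite rinterp_can.
    apply pure_iso_unique, (fmor_iso (lift pN F) Hg).
Qed.

End Reflection.

Theorem proposition3p5 :
  forall M : SMC,
  exists (R : SMC) (eta : SMFunctor M R),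
    pure R /\
    forall (N : SMC), pure N -> forall F : SMFunctor M N,
      exists G : SMFunctor R N,
        smf_comp_data G eta = smf_data F /\
        forall G' : SMFunctor R N,
          smf_comp_data G' eta = smf_data F -> smf_data G' = smf_data G.
Proof.
  intro M. exists (RSMC M), (eta M). split.
  - apply RSMC_pure.
  - intros N pN F. exists (lift pN F). split.
    + apply lift_comp_eta.
    + intros G' HG'. apply lift_unique, HG'.
Qed.
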